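(* Let $N\ge2$, $g\ge1$, and let $A(z)=\sum_{k=0}^{g-1}z^kA^{(k)}$ with $A^{(k)}\in M_N(\mathbb{C})$, $A^{(g-1)}\neq0$, be a polynomial loop of genus $g$, i.e. $A(z)$ is unitary for every $z\in\mathbb{T}=\{z\in\mathbb{C}:|z|=1\}$. Extend $A$ to all $z\in\mathbb{C}$ by the same polynomial formula. Then for all $z\in\mathbb{C}$, $$\bigl(\min(1,|z|^2)\bigr)^{g-1}\,\mathbb{1}_N\;\le\;A(z)^*A(z)\;\le\;\bigl(\max(1,|z|^2)\bigr)^{g-1}\,\mathbb{1}_N,$$ in the order of positive operators on $\mathbb{C}^N$, where $\mathbb{1}_N$ is the identity matrix. *)

From HB Require Import structures.
From mathcomp Require Import all_boot all_order all_algebra.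
From mathcomp Require Import complex.
From mathcomp Require Import reals.
Set Implicit Arguments. Unset Strict Implicit. Unset Printing Implicit Defensive.
Import Order.TTheory GRing.Theory Num.Theory.
Local Open Scope ring_scope.
Local Open Scope complex_scope.

Definition adjmx (C : numClosedFieldType) (m n : nat) (M : 'M[C]_(m, n)) : 'M[C]_(n, m) :=
  (map_mx Num.conj M)^T.

Definition unitary_mx (C : numClosedFieldType) (n : nat) (U : 'M[C]_n) : Prop :=
  adjmx U *m U = 1%:M /\ U *m adjmx U = 1%:M.

(* positive (semidefinite) operator: <v, M v> >= 0 for all v (in the order of
   the numClosedField C, this means real and nonnegative) *)
Definition psd_mx (C : numClosedFieldType) (n : nat) (M : 'M[C]_n) : Prop :=
  forall v : 'cV[C]_n, 0 <= (adjmx v *m M *m v) 0 0.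

Definition loewner_le (C : numClosedFieldType) (n : nat) (M1 M2 : 'M[C]_n) : Prop :=
  psd_mx (M2 - M1).

Definition loop_eval (C : ringType) (n g : nat) (A : nat -> 'M[C]_n) (z : C) : 'M[C]_n :=
  \sum_(k < g) z ^+ k *: A k.

(* Fix v and let P(z) = A(z) v = sum_k z^k w_k, so that |P(z)|^2 = |v|^2 on the
   unit circle. Horner's scheme P_j = w_j + z P_(j+1) for the tails P_j of P
   yields the identity
     |P(z)|^2 = sum_k |w_k|^2 + (|z|^2 - 1) sum_(j >= 1) |P_j(z)|^2 + 2 Re (z c(z))
   for a polynomial c whose coefficients are the correlations
   sum_k <w_(k+m+1), w_k>. On the circle 2 Re (z c(z)) is therefore constant,
   which forces c = 0 and sum_k |w_k|^2 = |v|^2; hence |P(z)|^2 - |v|^2 has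
   the sign of |z|^2 - 1. The two remaining bounds follow by applying this to
   the reversed polynomial z^(g-1) P(1/z), which is again constant on the
   circle. *)

From HB Require Import structures.
From mathcomp Require Import all_boot all_order all_algebra.
From mathcomp Require Import sesquilinear spectral complex reals.
From mathcomp Require Import ring zify.
Import Order.TTheory GRing.Theory Num.Theory.
Set Implicit Arguments. Unset Strict Implicit. Unset Printing Implicit Defensive.
Local Open Scope ring_scope.

Section UnitCircle.
Variable C : numClosedFieldType.
Implicit Types (p q : {poly C}) (z : C).

Let cayley (k : nat) : C := (1 + 'i * k%:R) / (1 - 'i * k%:R).

Let conj_cayley_num (k : nat) : (1 + 'i * k%:R)^* = 1 - 'i * k%:R :> C.
Proof. by rewrite rmorphD rmorph1 rmorphM /= conjCi conjC_nat mulNr. Qed.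

Let cayley_num_neq0 (k : nat) : 1 + 'i * k%:R != 0 :> C.
Proof.
apply/eqP => /(congr1 (@Re _)); rewrite Re_rect ?realn ?real1 // raddf0.
exact/eqP/oner_neq0.
Qed.

Let norm_cayley k : `|cayley k| = 1.
Proof.
by rewrite normf_div -conj_cayley_num norm_conjC divff // normr_eq0.
Qed.

Let cayley_inj : injective cayley.
Proof.
move=> k l; rewrite /cayley -!conj_cayley_num => /eqP.
rewrite eqr_div ?conjC_eq0 ?cayley_num_neq0 // !conj_cayley_num => /eqP e.
have : 'i * (k%:R - l%:R) * 2%:R = 0 :> C.
  rewrite -(subrr ((1 + 'i * l%:R) * (1 - 'i * k%:R))) -[X in _ = X - _]e; ring.
move/eqP; rewrite !mulf_eq0 pnatr_eq0 (negbTE (neq0Ci C)) orbF /= subr_eq0 eqr_nat.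
by move/eqP.
Qed.

Lemma poly_eq0_on_circle p : (forall z, `|z| = 1 -> p.[z] = 0) -> p = 0.
Proof.
move=> p_circle; apply/eqP; apply: contraT => pN0.
have := @max_poly_roots _ p (mkseq cayley (size p)) pN0.
rewrite size_mkseq ltnn mkseq_uniq // => -> //.
by apply/allP => _ /mapP[k _ ->]; rewrite /root p_circle.
Qed.

Lemma trig_poly_const_on_circle q (d : C) :
  (forall z, `|z| = 1 -> z * q.[z] + (z * q.[z])^* = d) -> q = 0 /\ d = 0.
Proof.
(* On the circle z^* = z^-1, so p.[z] = z^m * (z q(z) + (z q(z))^* - d); the
   three summands of p live in the disjoint degree ranges > m, < m and = m. *)
move=> q_circle; set m := size q.
pose p := 'X^(m.+1) * q + \sum_(k < m) (q`_k)^* *: 'X^(m - k.+1) - d *: 'X^m.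
have p_circle z : `|z| = 1 -> p.[z] = 0.
  move=> z1; have zzC : z * z^* = 1 by rewrite -normCK z1 expr1n.
  have conj_part : z ^+ m * (z * q.[z])^* = \sum_(k < m) (q`_k)^* * z ^+ (m - k.+1).
    rewrite horner_coef rmorphM rmorph_sum !mulr_sumr /=.
    apply: eq_bigr => -[k /= km] _; rewrite rmorphM rmorphXn /=.
    have -> : z ^+ m = z ^+ (m - k.+1) * z ^+ k.+1.
      by rewrite -exprD subnK.
    have zkC : z ^+ k.+1 * z^* ^+ k.+1 = 1 by rewrite -exprMn zzC expr1n.
    by rewrite [z^* * _]mulrCA -exprS mulrACA zkC mulr1 mulrC.
  have -> : p.[z] = z ^+ m * (z * q.[z] + (z * q.[z])^* - d).
    rewrite mulrBr mulrDr conj_part mulrA -exprSr [z ^+ m * d]mulrC.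
    rewrite !(hornerD, hornerN, hornerM, hornerZ, hornerXn) horner_sum.
    by under eq_bigr do rewrite hornerZ hornerXn.
  by rewrite q_circle // subrr mulr0.
have p0 := poly_eq0_on_circle p_circle.
have coef_conj_part j : (m <= j)%N ->
    (\sum_(k < m) (q`_k)^* *: 'X^(m - k.+1))`_j = 0 :> C.
  move=> mj; rewrite coef_sum big1 // => k _.
  by rewrite coefZ coefXn gtn_eqF ?mulr0 //; have := ltn_ord k; lia.
have d0 : d = 0.
  have := congr1 (coefp m) p0; rewrite /= coef0 !coefB coefD coefXnM ltnSn.
  by rewrite coef_conj_part // coefZ coefXn eqxx mulr1 add0r sub0r => /eqP; rewrite oppr_eq0 => /eqP.
split=> //; apply/polyP => k; rewrite coef0.
have := congr1 (coefp (m.+1 + k)) p0; rewrite /= coef0 !coefB coefD coefXnM.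
rewrite ltnNge leq_addr addKn coef_conj_part ?coefZ ?coefXn; last by lia.
by rewrite d0 mul0r !subr0 addr0.
Qed.

End UnitCircle.

Section HornerVec.
Variables (R : fieldType) (V : lmodType R).
Implicit Types (s : seq V) (a : V) (x : R).

Fixpoint horner_vec s x : V := if s is a :: s' then a + x *: horner_vec s' x else 0.

Lemma horner_vecE s x : horner_vec s x = \sum_(i < size s) x ^+ i *: s`_i.
Proof.
elim: s => [|a s IHs] /=; first by rewrite big_ord0.
rewrite big_ord_recl expr0 scale1r IHs scaler_sumr; congr (_ + _).
by apply: eq_bigr => i _; rewrite scalerA -exprS.
Qed.

Lemma horner_vec_rcons s a x :
  horner_vec (rcons s a) x = horner_vec s x + x ^+ size s *: a.
Proof.
elim: s => [|b s IHs] /=; first by rewrite expr0 scale1r scaler0 addr0 add0r.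
by rewrite IHs scalerDr addrA exprS scalerA.
Qed.

Lemma horner_vec_rev s x :
  x != 0 -> horner_vec s x = x ^+ (size s).-1 *: horner_vec (rev s) x^-1.
Proof.
move=> x0; elim/last_ind: s => [|s a IHs] /=; first by rewrite scaler0.
rewrite horner_vec_rcons rev_rcons /= size_rcons scalerDr scalerA addrC.
congr (_ + _); case: s IHs => [|b s] IHs; first by rewrite /= scaler0.
by rewrite IHs exprSr mulfK.
Qed.

End HornerVec.

Section HornerDot.
Variables (C : numClosedFieldType) (U : lmodType C) (form : {dot U for Num.conj}).
Local Notation "''[' u , v ]" := (form u v).
Local Notation "''[' u ]" := (form u u).
Implicit Types (s : seq U) (a : U) (z : C).

Fixpoint horner_tails_dnorm s z : C :=
  if s is _ :: s' then '[horner_vec s' z] + horner_tails_dnorm s' z else 0.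

Fixpoint cross_poly s : {poly C} :=
  if s is a :: s' then Poly [seq '[u, a] | u <- s'] + cross_poly s' else 0.

Lemma horner_tails_dnorm_ge0 s z : 0 <= horner_tails_dnorm s z.
Proof. by elim: s => [|a s IHs] //=; rewrite addr_ge0 ?dnorm_ge0. Qed.

Lemma dotl_horner_vec a s z : '[horner_vec s z, a] = (Poly [seq '[u, a] | u <- s]).[z].
Proof.
elim: s => [|b s IHs] /=; first by rewrite linear0l horner0.
by rewrite linearDl linearZl_LR /= IHs horner_cons mulrC addrC.
Qed.

Lemma dnorm_horner_vec s z :
  '[horner_vec s z] = \sum_(u <- s) '[u] + (`|z| ^+ 2 - 1) * horner_tails_dnorm s z
                      + (z * (cross_poly s).[z] + (z * (cross_poly s).[z])^*).
Proof.
elim: s => [|a s IHs] /=; first by rewrite linear0l big_nil horner0 !mulr0 conjC0 !addr0.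
rewrite addrC dnormD dnormZ linearZl_LR /= (dotl_horner_vec a) big_cons hornerD.
rewrite IHs; set c := (Poly _).[z]; set q := (cross_poly s).[z].
by rewrite (mulrDr z c q) rmorphD /=; ring.
Qed.

Section Circle.
Variables (s : seq U) (K : C).
Hypothesis s_circle : forall z, `|z| = 1 -> '[horner_vec s z] = K.

Lemma dnorm_horner_vec_circle z :
  '[horner_vec s z] = K + (`|z| ^+ 2 - 1) * horner_tails_dnorm s z.
Proof.
have [q0 /eqP] : cross_poly s = 0 /\ K - \sum_(u <- s) '[u] = 0.
  apply: trig_poly_const_on_circle => x x1.
  rewrite -(s_circle x1) dnorm_horner_vec x1 expr1n subrr mul0r addr0.
  by rewrite [RHS]addrC addKr.
rewrite subr_eq0 => /eqP KE.
by rewrite dnorm_horner_vec q0 horner0 mulr0 conjC0 !addr0 KE.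
Qed.

Lemma dnorm_horner_vec_le_in_disc z : `|z| ^+ 2 <= 1 -> '[horner_vec s z] <= K.
Proof.
move=> z_in; rewrite dnorm_horner_vec_circle gerDl.
by rewrite mulr_le0_ge0 ?subr_le0 ?horner_tails_dnorm_ge0.
Qed.

Lemma dnorm_horner_vec_ge_out_disc z : 1 <= `|z| ^+ 2 -> K <= '[horner_vec s z].
Proof.
move=> z_out; rewrite dnorm_horner_vec_circle lerDl.
by rewrite mulr_ge0 ?subr_ge0 ?horner_tails_dnorm_ge0.
Qed.

End Circle.

Lemma dnorm_horner_vec_rev s z : z != 0 ->
  '[horner_vec s z] = (`|z| ^+ 2) ^+ (size s).-1 * '[horner_vec (rev s) z^-1].
Proof.
by move=> z0; rewrite (horner_vec_rev s z0) dnormZ normrX -!exprM mulnC.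
Qed.

Lemma dnorm_horner_vec_circle_rev s K : (forall z, `|z| = 1 -> '[horner_vec s z] = K) ->
  forall z, `|z| = 1 -> '[horner_vec (rev s) z] = K.
Proof.
move=> s_circle z z1; have z0 : z != 0 by rewrite -normr_eq0 z1 oner_neq0.
rewrite dnorm_horner_vec_rev // revK z1 expr1n expr1n mul1r s_circle //.
by rewrite normfV z1 invr1.
Qed.

Section Bounds.
Variables (s : seq U) (K : C).
Hypothesis s_circle : forall z, `|z| = 1 -> '[horner_vec s z] = K.

Lemma dnorm_horner_vec_ge_in_disc z :
  `|z| ^+ 2 <= 1 -> (`|z| ^+ 2) ^+ (size s).-1 * K <= '[horner_vec s z].
Proof.
move=> z_in; have [->|z0] := eqVneq z 0.
  rewrite normr0 expr2 mul0r; move: s_circle.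
  case: s => [|a [|b s']] s'_circle /=; last by rewrite expr0n mul0r dnorm_ge0.
    by rewrite expr0 mul1r -(s'_circle 1 (normr1 _)).
  by rewrite expr0 mul1r -(s'_circle 1 (normr1 _)) /= !scaler0.
rewrite dnorm_horner_vec_rev // ler_wpM2l ?exprn_ge0 //.
rewrite (dnorm_horner_vec_ge_out_disc (dnorm_horner_vec_circle_rev s_circle)) //.
by rewrite normfV exprVn invf_ge1 // exprn_gt0 // normr_gt0.
Qed.

Lemma dnorm_horner_vec_le_out_disc z :
  1 <= `|z| ^+ 2 -> '[horner_vec s z] <= (`|z| ^+ 2) ^+ (size s).-1 * K.
Proof.
move=> z_out; have z0 : z != 0.
  by apply: contraTneq z_out => ->; rewrite normr0 expr2 mul0r ler10.
rewrite dnorm_horner_vec_rev // ler_wpM2l ?exprn_ge0 //.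
rewrite (dnorm_horner_vec_le_in_disc (dnorm_horner_vec_circle_rev s_circle)) //.
by rewrite normfV exprVn invf_le1 // exprn_gt0 // normr_gt0.
Qed.

Lemma dnorm_horner_vec_bounds z :
  (Num.min 1 (`|z| ^+ 2)) ^+ (size s).-1 * K <= '[horner_vec s z]
    <= (Num.max 1 (`|z| ^+ 2)) ^+ (size s).-1 * K.
Proof.
have t_real : `|z| ^+ 2 \is Num.real by rewrite realX ?normr_real.
case: (real_leP (real1 C) t_real) => t1; rewrite expr1n mul1r.
  by rewrite dnorm_horner_vec_ge_out_disc ?dnorm_horner_vec_le_out_disc.
by rewrite dnorm_horner_vec_ge_in_disc ?dnorm_horner_vec_le_in_disc ?ltW.
Qed.

End Bounds.

End HornerDot.

Section QuadraticForm.
Variables (C : numClosedFieldType) (n : nat).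
Implicit Types (u v : 'cV[C]_n) (M : 'M[C]_n).

(* dotmx is the dot product of row vectors, hence the transpositions. *)
Lemma adjmx_mul_dotmx u v : (adjmx u *m v) 0 0 = dotmx v^T u^T.
Proof. by rewrite dotmxE trmxK -(trmxK (map_mx _ u)) -trmx_mul [RHS]mxE. Qed.

Lemma loewner_leP M1 M2 : loewner_le M1 M2 <->
  forall v, (adjmx v *m M1 *m v) 0 0 <= (adjmx v *m M2 *m v) 0 0.
Proof.
split=> le12 v; move: (le12 v); rewrite mulmxBr mulmxBl;
  by move: (adjmx v *m M2 *m v) (adjmx v *m M1 *m v) => X Y; rewrite !mxE subr_ge0.
Qed.

Lemma adjmxM m p (A : 'M[C]_(m, n)) (B : 'M[C]_(n, p)) :
  adjmx (A *m B) = adjmx B *m adjmx A.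
Proof. by rewrite /adjmx map_mxM trmx_mul. Qed.

Lemma qform_gram (B : 'M[C]_n) v :
  (adjmx v *m (adjmx B *m B) *m v) 0 0 = dotmx (B *m v)^T (B *m v)^T.
Proof. by rewrite -adjmx_mul_dotmx adjmxM !mulmxA. Qed.

Lemma qform_scalar (c : C) v : (adjmx v *m (c *: 1%:M) *m v) 0 0 = c * dotmx v^T v^T.
Proof. by rewrite -adjmx_mul_dotmx scalemx1 mul_mx_scalar -scalemxAl [LHS]mxE. Qed.

End QuadraticForm.

Lemma loop_eval_mulmx (F : fieldType) n g (A : nat -> 'M[F]_n) (v : 'cV[F]_n) z :
  (loop_eval g A z *m v)^T = horner_vec (mkseq (fun k => (A k *m v)^T) g) z.
Proof.
rewrite horner_vecE size_mkseq /loop_eval mulmx_suml linear_sum.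
by apply: eq_bigr => k _; rewrite nth_mkseq // -scalemxAl linearZ.
Qed.

Unset Implicit Arguments.
Set Strict Implicit.
Local Open Scope complex_scope.

Theorem corollary5p3 (R : realType) (N g : nat) (A : nat -> 'M[R[i]]_N) :
  (2 <= N)%N -> (1 <= g)%N -> A g.-1 != 0 ->
  (forall z : R[i], `|z| = 1 -> unitary_mx (loop_eval g A z)) ->
  forall z : R[i],
    loewner_le ((Num.min 1 (`|z| ^+ 2)) ^+ g.-1 *: 1%:M)
               (adjmx (loop_eval g A z) *m loop_eval g A z) /\
    loewner_le (adjmx (loop_eval g A z) *m loop_eval g A z)
               ((Num.max 1 (`|z| ^+ 2)) ^+ g.-1 *: 1%:M).
Proof.
move=> _ _ _ A_unitary z.
have bounds v : (Num.min 1 (`|z| ^+ 2)) ^+ g.-1 * dotmx v^T v^T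
    <= dotmx (loop_eval g A z *m v)^T (loop_eval g A z *m v)^T
    <= (Num.max 1 (`|z| ^+ 2)) ^+ g.-1 * dotmx v^T v^T.
  rewrite loop_eval_mulmx -[in g.-1](size_mkseq (fun k => (A k *m v)^T) g).
  apply: dnorm_horner_vec_bounds => x x1.
  rewrite -loop_eval_mulmx /= -qform_gram (proj1 (A_unitary x x1)).
  by rewrite -[1%:M]scale1r qform_scalar mul1r.
by split; apply/loewner_leP => v; rewrite qform_gram qform_scalar; case/andP: (bounds v).
Qed.
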